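(* Let $\mathcal X_1,\mathcal X_2$ each be either $(0,1)$ or $(0,1)^\infty$, let $\mu_1,\mu_2$ be probability measures on $\mathcal X_1,\mathcal X_2$ respectively, and let $B\subset\mathcal X_1\times\mathcal X_2$ be a Borel set. Assume that $S_{\mu_1-\nu_1,\mu_2-\nu_2}(B)=S_{\mu_1,\mu_2}(B)-\nu(B)$ for every positive measure $\nu$ on $B$ whose marginals $\nu_1,\nu_2$ satisfy $\nu_1\le\mu_1$ and $\nu_2\le\mu_2$. Then the supremum $S_{\mu_1,\mu_2}(B)$ is attained: there is a probability measure $\mu$ on $\mathcal X_1\times\mathcal X_2$ with marginals $\mu_1,\mu_2$ and $\mu(B)=S_{\mu_1,\mu_2}(B)$.
   Context: For finite positive measures $\lambda_1,\lambda_2$ on $\mathcal X_1,\mathcal X_2$ with $\lambda_1(\mathcal X_1)=\lambda_2(\mathcal X_2)$, and a Borel set $B\subset\mathcal X_1\times\mathcal X_2$, define $S_{\lambda_1,\lambda_2}(B)$ as the supremum of $\lambda(B)$ over all positive measures $\lambda$ on $\mathcal X_1\times\mathcal X_2$ with marginals $\lambda_1,\lambda_2$. *)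

From HB Require Import structures.
From mathcomp Require Import all_boot all_order all_algebra.
From mathcomp Require Import all_classical all_reals all_analysis.
Set Implicit Arguments. Unset Strict Implicit. Unset Printing Implicit Defensive.
Import Order.TTheory GRing.Theory Num.Theory.
Local Open Scope classical_set_scope.
Local Open Scope ring_scope.

Definition oi (R : realType) := {x : R | 0 < x < 1}.
HB.instance Definition _ (R : realType) := [Choice of oi R by <:].
Lemma half_oi (R : realType) : (0 < 2^-1 :> R) && (2^-1 < 1 :> R).
Proof. by rewrite invr_gt0 ltr0n /= invf_lt1 // ltr1n. Qed.
HB.instance Definition _ (R : realType) :=
  isPointed.Build (oi R) (exist _ 2^-1 (half_oi R)).

(* (0,1) with the Borel sigma-algebra (trace of the Borel sets of R). *)
Definition oi_gen (R : realType) : set (set (oi R)) :=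
  preimage_set_system setT (@sval R (fun x : R => 0 < x < 1)) (measurable : set (set R)).
Definition I01 (R : realType) := g_sigma_algebraType (@oi_gen R).
Definition I01_disp (R : realType) := sigma_display (@oi_gen R).

(* (0,1)^infinity = sequences in (0,1), with the product sigma-algebra
   (generated by the measurable cylinders {f | f n \in A}); this is its
   Borel sigma-algebra for the product topology. *)
Definition oiseq (R : realType) := nat -> I01 R.
Definition cyl_gen (R : realType) : set (set (oiseq R)) :=
  fun S => exists n (A : set (I01 R)), measurable A /\ S = (fun f => f n) @^-1` A.
Definition I01inf (R : realType) := g_sigma_algebraType (@cyl_gen R).
Definition I01inf_disp (R : realType) := sigma_display (@cyl_gen R).

Definition Xdisp (R : realType) (b : bool) : measure_display :=
  if b then I01_disp R else I01inf_disp R.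
Definition Xsp (R : realType) (b : bool) : measurableType (Xdisp R b) :=
  match b return measurableType (Xdisp R b) with
  | true => I01 R
  | false => I01inf R
  end.

Local Open Scope ereal_scope.

Definition has_marginals d1 d2 (X1 : measurableType d1) (X2 : measurableType d2)
  (R : realType) (lam : set (X1 * X2) -> \bar R)
  (l1 : set X1 -> \bar R) (l2 : set X2 -> \bar R) : Prop :=
  (forall A : set X1, measurable A -> lam (A `*` setT) = l1 A) /\
  (forall A : set X2, measurable A -> lam (setT `*` A) = l2 A).

Definition Ssup d1 d2 (X1 : measurableType d1) (X2 : measurableType d2)
  (R : realType) (l1 : set X1 -> \bar R) (l2 : set X2 -> \bar R)
  (B : set (X1 * X2)) : \bar R :=
  ereal_sup [set lam B | lam in
    [set lam : {measure set (X1 * X2) -> \bar R} | has_marginals lam l1 l2]].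

From HB Require Import structures.
From mathcomp Require Import all_boot all_order all_algebra.
From mathcomp Require Import all_classical all_reals all_analysis.
Import Order.TTheory GRing.Theory Num.Theory.
Local Open Scope classical_set_scope.
Local Open Scope ereal_scope.

(* Start from nu_0 = 0 and let nu_(n+1) = nu_n + lam_n
   restricted to B, where lam_n couples the residual marginals
   mu_i - (i-th marginal of nu_n) and lam_n(B) is within 1/(n+1) of their
   supremum.  By hypothesis that supremum is S - nu_n(B), so
   nu_(n+1)(B) > S - 1/(n+1), and every nu_n is a measure concentrated on B
   with marginals below mu_1, mu_2.  The increasing limit nu keeps these
   properties and has nu(B) >= S; adding to it any coupling of its residual
   marginals yields a coupling mu of (mu_1, mu_2) with S >= mu(B) >= nu(B) >= S. *)

Lemma mnormalize_mass1 d (T : measurableType d) (R : realType)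
    (mu : measure T R) (P : probability T R) :
  mu [set: T] = 1 -> mnormalize mu P = mu.
Proof.
by move=> mass1; apply/funext => A; rewrite /mnormalize mass1 onee_eq0 /= invr1 mule1.
Qed.

Section Ssup_bounds.
Context d1 d2 (X1 : measurableType d1) (X2 : measurableType d2) (R : realType).

Lemma Ssup_le_mass (l1 : set X1 -> \bar R) (l2 : set X2 -> \bar R)
    (B : set (X1 * X2)) :
  measurable B -> Ssup l1 l2 B <= l1 [set: X1].
Proof.
move=> mB; apply: ge_ereal_sup => _ [lam [lam1 _] <-].
by rewrite -lam1 // setXTT; apply: le_measure; rewrite ?inE.
Qed.

Lemma has_marginals_product (mu1 : probability X1 R) (mu2 : probability X2 R) :
  has_marginals (mu1 \x mu2) mu1 mu2.
Proof.
split=> A mA; rewrite product_measure1E //.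
- by rewrite -[RHS]mule1; congr (_ * _); exact: probability_setT.
- by rewrite -[RHS]mul1e; congr (_ * _); exact: probability_setT.
Qed.

Lemma Ssup_probability_fin (mu1 : probability X1 R) (mu2 : probability X2 R)
    (B : set (X1 * X2)) :
  measurable B -> Ssup mu1 mu2 B \is a fin_num.
Proof.
move=> mB; rewrite ge0_fin_numE; last first.
  apply: le_trans (ereal_sup_ubound _); last first.
    by exists (mu1 \x mu2 : measure _ R) => //; exact: has_marginals_product.
  exact: measure_ge0.
by rewrite (le_lt_trans (Ssup_le_mass _ _ _ mB)) // probability_setT ltey.
Qed.

End Ssup_bounds.

Section residual_couplings.
Context d1 d2 (X1 : measurableType d1) (X2 : measurableType d2) (R : realType).
Local Notation T := (X1 * X2)%type.
Variables (mu1 : probability X1 R) (mu2 : probability X2 R).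
Variables (B : set T) (mB : measurable B).

Local Notation Sup := (Ssup mu1 mu2 B).

Definition subcoupling (nu : measure T R) : Prop := [/\ nu (~` B) = 0,
  forall A, measurable A -> nu (A `*` setT) <= mu1 A &
  forall A, measurable A -> nu (setT `*` A) <= mu2 A].

Definition residual_coupling (nu lam : measure T R) : Prop :=
  has_marginals lam (fun A => mu1 A - nu (A `*` setT))
                    (fun A => mu2 A - nu (setT `*` A)).

Definition residual_Ssup (nu : measure T R) : \bar R :=
  Ssup (fun A => mu1 A - nu (A `*` setT)) (fun A => mu2 A - nu (setT `*` A)) B.

Lemma subcoupling0 : subcoupling mzero.
Proof. by split=> // A _; exact: measure_ge0. Qed.

Lemma subcoupling_fin nu C : subcoupling nu -> measurable C -> nu C \is a fin_num.
Proof.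
move=> [_ nu1 _] mC; rewrite ge0_fin_numE ?measure_ge0 //.
apply: (@le_lt_trans _ _ (mu1 setT)); last by rewrite probability_setT ltey.
apply: le_trans (nu1 _ measurableT); rewrite setXTT.
by apply: le_measure; rewrite ?inE.
Qed.

Lemma residual_coupling_add {nu lam} : subcoupling nu -> residual_coupling nu lam ->
  has_marginals (measure_add nu lam) mu1 mu2.
Proof.
move=> snu [lam1 lam2]; split=> A mA; rewrite measure_addE ?(lam1, lam2) //;
  by rewrite addeC subeK //; apply: subcoupling_fin => //; exact: measurableX.
Qed.

Lemma subcoupling_add {nu lam} : subcoupling nu -> residual_coupling nu lam ->
  subcoupling (measure_add nu (mrestr lam mB)).
Proof.
move=> snu rlam; have [nuB _ _] := snu.
have [marg1 marg2] := residual_coupling_add snu rlam.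
have addE C : (measure_add nu (mrestr lam mB) : measure T R) C = nu C + lam (C `&` B).
  exact: measure_addE.
split=> [|A mA|A mA]; rewrite addE.
- by rewrite nuB setICl measure0 adde0.
- have mAT : measurable (A `*` [set: X2]) by apply: measurableX.
  rewrite -marg1 // measure_addE leeD2l //.
  by apply: le_measure; rewrite ?inE //; exact: measurableI.
- have mTA : measurable ([set: X1] `*` A) by apply: measurableX.
  rewrite -marg2 // measure_addE leeD2l //.
  by apply: le_measure; rewrite ?inE //; exact: measurableI.
Qed.

Lemma coupling_of_residual {nu lam} : subcoupling nu -> residual_coupling nu lam ->
  exists mu : probability T R, has_marginals mu mu1 mu2 /\ mu B = nu B + lam B.
Proof.
move=> snu rlam; have marg := residual_coupling_add snu rlam.
have mass1 : measure_add nu lam setT = 1.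
  by rewrite -setXTT marg.1 // probability_setT.
(* [mnormalize] only repackages the mass-one measure [nu + lam] as a probability. *)
exists (mnormalize (measure_add nu lam) (mu1 \x mu2)).
rewrite /= mnormalize_mass1 //; split; [exact: marg | exact: measure_addE].
Qed.

Section greedy.
Variable next : measure T R -> nat -> measure T R.
Hypothesis next_improves : forall nu n, subcoupling nu ->
  residual_coupling nu (next nu n) /\ Sup - (n.+1%:R^-1)%:E < nu B + next nu n B.

Fixpoint greedy n : measure T R :=
  if n is k.+1 then measure_add (greedy k) (mrestr (next (greedy k) k) mB)
  else mzero.

Definition greedy_increment n : measure T R := mrestr (next (greedy n) n) mB.

Definition greedy_lim : measure T R := mseries greedy_increment 0.

Lemma greedyE n A : greedy n A = \sum_(0 <= k < n) greedy_increment k A.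
Proof.
elim: n => [|n IH]; first by rewrite big_geq.
by rewrite big_nat_recr //= -IH; exact: measure_addE.
Qed.

Lemma subcoupling_greedy n : subcoupling (greedy n).
Proof.
elim: n => [|n IH]; first exact: subcoupling0.
exact: subcoupling_add IH (next_improves _ n IH).1.
Qed.

Lemma greedy_gt n : Sup - (n.+1%:R^-1)%:E < greedy n.+1 B.
Proof.
have [_ lt_next] := next_improves _ n (subcoupling_greedy n).
suff -> : greedy n.+1 B = greedy n B + next (greedy n) n B by [].
by rewrite -[in X in _ + X](setIid B); exact: measure_addE.
Qed.

Lemma greedy_le_lim n A : greedy n A <= greedy_lim A.
Proof. by rewrite greedyE; apply: nneseries_lim_ge => k _ _; exact: measure_ge0. Qed.

Lemma greedy_lim_le A c : (forall n, greedy n A <= c) -> greedy_lim A <= c.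
Proof.
move=> le_c; apply: lime_le.
  by apply: is_cvg_nneseries => k _ _; exact: measure_ge0.
by apply: nearW => n; rewrite -greedyE.
Qed.

Lemma subcoupling_greedy_lim : subcoupling greedy_lim.
Proof.
split=> [|A mA|A mA].
- apply/eqP; rewrite eq_le measure_ge0 andbT; apply: greedy_lim_le => n.
  by have [-> _ _] := subcoupling_greedy n.
- by apply: greedy_lim_le => n; have [_ + _] := subcoupling_greedy n; apply.
- by apply: greedy_lim_le => n; have [_ _] := subcoupling_greedy n; apply.
Qed.

Lemma Ssup_le_greedy_lim : Sup <= greedy_lim B.
Proof.
apply/lee_subgt0Pr => e e0.
have [n lt_e] : exists n, (n.+1%:R^-1 < e)%R.
  by exists (Num.truncn e^-1); rewrite -ltf_pV2 ?posrE ?invr_gt0 // invrK truncnS_gt.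
apply: le_trans (greedy_le_lim n.+1 B); apply: le_trans (ltW (greedy_gt n)).
by rewrite leeB // lee_fin ltW.
Qed.

End greedy.

Hypothesis residual_SsupE : forall nu, subcoupling nu -> residual_Ssup nu = Sup - nu B.

Lemma residual_Ssup_fin {nu} : subcoupling nu -> residual_Ssup nu \is a fin_num.
Proof.
by move=> snu; rewrite residual_SsupE // fin_numB Ssup_probability_fin // subcoupling_fin.
Qed.

Lemma residual_improvement nu n : exists lam, subcoupling nu ->
  residual_coupling nu lam /\ Sup - (n.+1%:R^-1)%:E < nu B + lam B.
Proof.
have [snu|] := pselect (subcoupling nu); last by exists mzero.
have fin_res := residual_Ssup_fin snu.
have : residual_Ssup nu - (n.+1%:R^-1)%:E < residual_Ssup nu.
  by rewrite gte_subl // lte_fin invr_gt0.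
move=> /ereal_sup_gt[_ [lam rlam <-] lt_lam]; exists lam => _; split=> //.
by rewrite -lteBlDl ?subcoupling_fin // addeAC -residual_SsupE.
Qed.

Lemma Ssup_attained : exists mu : probability T R,
  has_marginals mu mu1 mu2 /\ mu B = Sup.
Proof.
have [next next_improves] := choice (fun p => residual_improvement p.1 p.2).
pose improves nu n := next_improves (nu, n).
have snu := subcoupling_greedy_lim _ improves.
set nu := greedy_lim _ in snu.
have [lam rlam] : exists lam, residual_coupling nu lam.
  have : -oo < residual_Ssup nu by rewrite ltNye_eq residual_Ssup_fin ?orbT.
  by move=> /ereal_sup_gt[_ [lam rlam _] _]; exists lam.
have [mu [marg muB]] := coupling_of_residual snu rlam.
exists mu; split=> //; apply: le_anti; rewrite ereal_sup_ubound /=; last by exists mu.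
by rewrite muB (le_trans (Ssup_le_greedy_lim _ improves)) // leeDl.
Qed.

End residual_couplings.

Theorem lemma3p6 (R : realType) (b1 b2 : bool)
  (mu1 : probability (Xsp R b1) R) (mu2 : probability (Xsp R b2) R)
  (B : set (Xsp R b1 * Xsp R b2)) (mB : measurable B) :
  (forall nu : measure (Xsp R b1 * Xsp R b2)%type R,
     nu (~` B) = 0 ->
     (forall A, measurable A -> nu (A `*` setT) <= mu1 A) ->
     (forall A, measurable A -> nu (setT `*` A) <= mu2 A) ->
     Ssup (fun A => mu1 A - nu (A `*` setT)) (fun A => mu2 A - nu (setT `*` A)) B
       = Ssup mu1 mu2 B - nu B) ->
  exists mu : probability (Xsp R b1 * Xsp R b2)%type R,
    has_marginals mu mu1 mu2 /\ mu B = Ssup mu1 mu2 B.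
Proof.
move=> residual_SsupE; apply: (@Ssup_attained _ _ _ _ R mu1 mu2 B mB) => nu [nuB nu1 nu2].
exact: residual_SsupE.
Qed.
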